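(* Let $n\ge1$, let $L_1,\dots,L_N$ be complex $n\times n$ matrices, let $\pi_1,\dots,\pi_n$ be mutually orthogonal rank-one orthogonal projectors on $\mathbb{C}^n$, let $w_{jk}:=\sum_{\alpha=1}^N \mathrm{Tr}(\pi_j L_\alpha\pi_k L_\alpha^\dagger)$ for $j\neq k$, and let $\Omega$ be the matrix with $\Omega_{jk}=w_{jk}$ ($j\ne k$) and $\Omega_{kk}=-\sum_{l\ne k}w_{lk}$. Let $N_1,\dots,N_{n_B}$ be the vertex sets of the basins of $G_\Omega$, $N_B=\bigcup_\eta N_\eta$, and let $G'_\Omega$ be the graph obtained from $G_\Omega$ by removing every edge whose two endpoints lie in the same basin. Then the kernel of $\Omega^T$ is spanned by the linearly independent vectors $$\kappa'_\eta := \Big(\sum_{\tau\in T_B(G'_\Omega)} W(\tau)\Big)\sum_{j\in N_\eta} e_j + \sum_{l\notin N_B}\ \sum_{\tau\in T_B(G'_\Omega,\eta,l)} W(\tau)\, e_l,\qquad \eta=1,\dots,n_B.$$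
   Context: $G_\Omega$ is the directed graph on $\{1,\dots,n\}$ with a directed edge from $k$ to $j$ of weight $w_{jk}$ for each $j\ne k$ with $w_{jk}\ne0$. A basin is a strongly connected component with no edge leaving it. $e_j$ is the $j$-th standard basis vector. For a digraph $G$ on $\{1,\dots,n\}$, $T_B(G)$ is the set of spanning forests of $G$ whose set of roots is exactly $N_B$: subgraphs containing all $n$ vertices, with no directed cycles, in which every vertex of $N_B$ has no outgoing edge and every vertex outside $N_B$ has exactly one outgoing edge. $T_B(G,\eta,l)$ is the set of forests in $T_B(G)$ in which vertex $l$ lies in a tree rooted at a vertex of $N_\eta$. $W(\tau)$ is the product of the edge weights of $\tau$, with $W(\tau)=1$ if $\tau$ has no edges. *)

From mathcomp Require Import all_boot all_algebra.
From mathcomp Require Import reals.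
From mathcomp.real_closed Require Export complex.
Set Implicit Arguments. Unset Strict Implicit. Unset Printing Implicit Defensive.
Import GRing.Theory Num.Theory.
Local Open Scope ring_scope.

Section Defs.
Variable C : numClosedFieldType.

Definition dag m p (M : 'M[C]_(m, p)) : 'M[C]_(p, m) := (map_mx Num.conj M)^T.

Variable n : nat.

Definition wmat (N : nat) (pi : 'I_n -> 'M[C]_n) (L : 'I_N -> 'M[C]_n)
  (j k : 'I_n) : C :=
  \sum_(a < N) \tr (pi j *m L a *m pi k *m dag (L a)).

Definition Omega (w : 'I_n -> 'I_n -> C) : 'M[C]_n :=
  \matrix_(j, k) if j == k then - \sum_(l | l != k) w l k else w j k.

Definition edgeG (w : 'I_n -> 'I_n -> C) : rel 'I_n :=
  fun k j => (j != k) && (w j k != 0).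

(* basin: a (nonempty) strongly connected set with no edge leaving it
   (such a set is automatically a maximal strongly connected component) *)
Definition is_basin (e : rel 'I_n) (S : {set 'I_n}) : bool :=
  [&& S != set0,
      [forall x in S, forall y in S, connect e x y] &
      [forall x in S, forall y, e x y ==> (y \in S)]].

Definition basins (e : rel 'I_n) : {set {set 'I_n}} := [set S | is_basin e S].

Definition NB (e : rel 'I_n) : {set 'I_n} := \bigcup_(S in basins e) S.

Definition edgeG' (w : 'I_n -> 'I_n -> C) : rel 'I_n :=
  fun k j => edgeG w k j &&
    ~~ [exists S in basins (edgeG w), (k \in S) && (j \in S)].

(* subgraphs are edge sets; the pair (k, j) is the edge k -> j *)
Definition frel (F : {set 'I_n * 'I_n}) : rel 'I_n := fun x y => (x, y) \in F.

Definition outdeg (F : {set 'I_n * 'I_n}) (v : 'I_n) : nat :=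
  #|[set p in F | p.1 == v]|.

(* F in T_B(G): F subgraph of G, acyclic, roots exactly the vertices of Nb *)
Definition is_forest (G : rel 'I_n) (Nb : {set 'I_n})
  (F : {set 'I_n * 'I_n}) : bool :=
  [&& [forall p in F, G p.1 p.2],
      [forall v, if v \in Nb then outdeg F v == 0%N else outdeg F v == 1%N] &
      [forall p in F, ~~ connect (frel F) p.2 p.1]].

Definition in_tree_of (F : {set 'I_n * 'I_n}) (Ns : {set 'I_n}) (l : 'I_n) : bool :=
  [exists r in Ns, connect (frel F) l r].

Definition Wt (w : 'I_n -> 'I_n -> C) (F : {set 'I_n * 'I_n}) : C :=
  \prod_(p in F) w p.2 p.1.

Definition evec (j : 'I_n) : 'cV[C]_n := delta_mx j 0.

Definition kappa' (w : 'I_n -> 'I_n -> C) (S : {set 'I_n}) : 'cV[C]_n :=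
  let G' := edgeG' w in
  let Nb := NB (edgeG w) in
  (\sum_(F | is_forest G' Nb F) Wt w F) *: (\sum_(j in S) evec j)
  + \sum_(l | l \notin Nb)
      (\sum_(F | is_forest G' Nb F && in_tree_of F S l) Wt w F) *: evec l.

End Defs.

From Pilot Require Import Defs.
From mathcomp Require Import all_boot all_order all_algebra.
From mathcomp Require Import reals ring.
From mathcomp.real_closed Require Import complex.
Set Implicit Arguments. Unset Strict Implicit. Unset Printing Implicit Defensive.
Import Order.TTheory GRing.Theory Num.Theory.

(* The pi_j being orthogonal projectors, w_jk = sum_a |pi_j L_a pi_k|^2 >= 0;
   this is all that is used of the hypotheses.  Row k of Omega^T v is
   sum_(j != k) w_jk (v_j - v_k), so the kernel of Omega^T consists of the
   functions that are harmonic for the weights w.  On N_B, kappa'_eta is Z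
   times the indicator of N_eta, where Z is the total weight of T_B(G'); at a
   transient vertex k, splitting every forest into the out-edge of k and a
   forest rooted at N_B + k turns the balance equation at k into an
   antisymmetric double sum.  A shortest-path forest towards N_B shows Z > 0,
   whence independence.  Conversely, by the maximum principle a real harmonic
   function is constant on the basins it reaches from a maximum, so one that
   vanishes somewhere on every basin vanishes identically; applied to the real
   and imaginary parts of a kernel vector minus the right combination of the
   kappa'_eta, this gives spanning. *)

Section Connect.
Variables (T : finType) (e : rel T).

Lemma connect_forward_closed (A : {pred T}) x y :
  (forall a b, a \in A -> e a b -> b \in A) -> x \in A -> connect e x y -> y \in A.
Proof.
move=> clA + /connectP [p + ->]; elim: p x => [|a p IHp] x //= xA /andP [exa].
exact/IHp/(clA x).
Qed.

Lemma connect_sink r y : (forall b, ~~ e r b) -> connect e r y -> y = r.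
Proof.
move=> sink_r /connectP [[|b p] /= ]; first by move=> _ ->.
by case/andP=> erb; move: (sink_r b); rewrite erb.
Qed.

Lemma connect_functional x y z : (forall a b c, e a b -> e a c -> b = c) ->
  connect e x y -> connect e x z -> connect e y z || connect e z y.
Proof.
move=> e_fun /connectP [p + ->]; elim: p x => [|a p IHp] x /=; first by move=> _ ->.
case/andP=> exa pth xz; case: (eqVneq z x) => [->|zx].
  by apply/orP; right; apply/connectP; exists (a :: p) => //=; rewrite exa.
apply: IHp pth _; case/connectP: xz => [[|b q] /=].
  by move=> _ zx'; rewrite zx' eqxx in zx.
by case/andP=> exb pq ->; rewrite (e_fun _ _ _ exa exb); apply/connectP; exists q.
Qed.

End Connect.

Section Basins.
Variables (n : nat) (e : rel 'I_n).
Implicit Types (S : {set 'I_n}).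

Lemma basin_closed S a b : is_basin e S -> a \in S -> e a b -> b \in S.
Proof. by case/and3P=> _ _ /forall_inP cl aS; move/forallP: (cl a aS) => /(_ b) /implyP. Qed.

Lemma basin_connect S a b : is_basin e S -> a \in S -> b \in S -> connect e a b.
Proof. by case/and3P=> _ /forall_inP sc _ aS; move/forall_inP: (sc a aS); apply. Qed.

Lemma basin_eq S S' x : is_basin e S -> is_basin e S' -> x \in S -> x \in S' -> S = S'.
Proof.
have sub U V : is_basin e U -> is_basin e V -> x \in U -> x \in V -> U \subset V.
  move=> bU bV xU xV; apply/subsetP=> y yU.
  by apply: connect_forward_closed xV (basin_connect bU xU yU) => a b; apply: basin_closed.
by move=> bS bS' xS xS'; apply/eqP; rewrite eqEsubset !sub.
Qed.

Lemma mem_basin S S' x :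
  S \in basins e -> S' \in basins e -> x \in S' -> (x \in S) = (S == S').
Proof.
rewrite !inE => bS bS' xS'; apply/idP/eqP => [xS | -> //].
exact: basin_eq bS bS' xS xS'.
Qed.

Lemma basin_subset_NB S : S \in basins e -> S \subset NB e.
Proof. exact: bigcup_sup. Qed.

Lemma basin_nonempty S : S \in basins e -> exists x, x \in S.
Proof. by rewrite inE => /and3P [/set0Pn]. Qed.

(* Among the vertices reachable from [x], one with fewest reachable vertices
   has a closed, strongly connected reachable set. *)
Lemma connect_basin x : exists2 S, is_basin e S & exists2 y, y \in S & connect e x y.
Proof.
pose reachable y := [set z | connect e y z].
case: (arg_minnP (fun y => #|reachable y|) (connect0 e x)) => y0 xy0 y0_min.
have reachable_y0 z : connect e y0 z -> reachable z = reachable y0.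
  move=> y0z; apply/eqP; rewrite eqEcard (y0_min z (connect_trans xy0 y0z)) andbT.
  by apply/subsetP=> u; rewrite !inE; apply: connect_trans.
exists (reachable y0); last by exists y0; rewrite // inE connect0.
apply/and3P; split.
- by apply/set0Pn; exists y0; rewrite inE connect0.
- apply/forall_inP=> a; rewrite inE => y0a; apply/forall_inP=> b; rewrite inE.
  have: y0 \in reachable a by rewrite (reachable_y0 a y0a) inE connect0.
  by rewrite inE; apply: connect_trans.
- apply/forall_inP=> a; rewrite inE => y0a; apply/forallP=> b; apply/implyP=> eab.
  by rewrite inE (connect_trans y0a) ?connect1.
Qed.

End Basins.

Section Forests.
Variable n : nat.
Implicit Types (F : {set 'I_n * 'I_n}) (Nb S : {set 'I_n}) (G : rel 'I_n).

Lemma outdeg0P F v : reflect (forall y, (v, y) \notin F) (outdeg F v == 0).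
Proof.
rewrite cards_eq0; apply: (iffP eqP) => [/setP F_v y | v_sink].
  by move: (F_v (v, y)); rewrite !inE eqxx andbT => ->.
apply/setP=> -[a b]; rewrite !inE /=.
by case: eqP => [->|]; rewrite ?andbF ?(negPf (v_sink b)).
Qed.

Lemma outdeg_le1_functional F v y z :
  outdeg F v <= 1 -> (v, y) \in F -> (v, z) \in F -> y = z.
Proof.
move/card_le1_eqP=> F_v vy vz.
by have := F_v (v, y) (v, z); rewrite !inE vy vz eqxx => /(_ isT isT) [].
Qed.

Lemma outdeg1_ex F v : outdeg F v = 1 -> exists y, (v, y) \in F.
Proof.
move/eqP/cards1P=> [[a b] /setP/(_ (a, b))]; rewrite !inE eqxx /= => /andP [abF /eqP <-].
by exists b.
Qed.

Lemma outdegU1 F k m v : (k, m) \notin F ->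
  outdeg ((k, m) |: F) v = outdeg F v + (v == k).
Proof.
move=> kmF; rewrite /outdeg; case: (eqVneq v k) => [->|vk].
  rewrite (_ : [set p in _ | _] = (k, m) |: [set p in F | p.1 == k]).
    by rewrite cardsU1 inE (negPf kmF) addnC.
  by apply/setP=> p; rewrite !inE; case: (eqVneq p (k, m)) => [->|]; rewrite ?eqxx.
rewrite addn0; apply: eq_card => p; rewrite !inE.
by case: (eqVneq p (k, m)) => [->|] //=; rewrite eq_sym (negPf vk) andbF.
Qed.

Lemma forestP G Nb F :
  reflect [/\ {in F, forall p, G p.1 p.2},
              {in Nb, forall v, outdeg F v = 0},
              (forall v, v \notin Nb -> outdeg F v = 1) &
              {in F, forall p, ~~ connect (Defs.frel F) p.2 p.1}]
          (is_forest G Nb F).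
Proof.
apply: (iffP and3P) => [[/forall_inP F_G /forallP F_deg /forall_inP F_acyc]|].
  split=> // v; move: (F_deg v); [move=> + vNb | move=> + /negPf vNb];
  by rewrite vNb => /eqP.
case=> F_G F_root F_deg F_acyc; split; [exact/forall_inP| |exact/forall_inP].
by apply/forallP=> v; case: ifPn => vNb; apply/eqP; [apply: F_root | apply: F_deg].
Qed.

Lemma forest_outdeg_le1 G Nb F v : is_forest G Nb F -> outdeg F v <= 1.
Proof.
by case/forestP=> _ F_root F_deg _; case: (boolP (v \in Nb)) => [/F_root|/F_deg] ->.
Qed.

Lemma forest_functional G Nb F a b c :
  is_forest G Nb F -> Defs.frel F a b -> Defs.frel F a c -> b = c.
Proof. by move/(forest_outdeg_le1 a); apply: outdeg_le1_functional. Qed.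

Lemma forest_root_sink G Nb F r :
  is_forest G Nb F -> r \in Nb -> forall b, (r, b) \notin F.
Proof. by case/forestP=> _ F_root _ _ /F_root/eqP/outdeg0P. Qed.

Lemma forest_root G Nb F r y :
  is_forest G Nb F -> r \in Nb -> connect (Defs.frel F) r y -> y = r.
Proof. by move=> fF rNb; apply: connect_sink; apply: forest_root_sink fF rNb. Qed.

Lemma forest_sub G G' Nb F :
  (forall x y, G x y -> G' x y) -> is_forest G Nb F -> is_forest G' Nb F.
Proof.
by move=> GG' /forestP [F_G *]; apply/forestP; split=> // p /F_G /GG'.
Qed.

Lemma in_tree_of_root G Nb F S x :
  is_forest G Nb F -> x \in Nb -> in_tree_of F S x = (x \in S).
Proof.
move=> fF xNb; apply/existsP/idP => [[r /andP [rS xr]]|xS].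
  by rewrite -(forest_root fF xNb xr).
by exists x; rewrite xS connect0.
Qed.

Section AddEdge.
Variables (F' : {set 'I_n * 'I_n}) (k m : 'I_n).
Local Notation Fk := ((k, m) |: F').

Lemma connect_subU1 x y : connect (Defs.frel F') x y -> connect (Defs.frel Fk) x y.
Proof. by apply: connect_sub => a b ab; apply: connect1; apply: setU1r. Qed.

Lemma connect_add_edge x y : connect (Defs.frel Fk) x y ->
  connect (Defs.frel F') x y \/
  connect (Defs.frel F') x k /\ connect (Defs.frel Fk) k y.
Proof.
case/connectP=> p + ->; elim: p x => [|a p IHp] x /=; first by left.
case/andP=> xa pth; case: (eqVneq x k) => [xk|xk].
  by subst x; right; split=> //; apply/connectP; exists (a :: p) => //; apply/andP.
have xaF' : Defs.frel F' x a by move: xa; rewrite /Defs.frel !inE xpair_eqE (negPf xk).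
by case: (IHp a pth) => [ay|[ak ky]]; [left|right; split] => //;
   apply: connect_trans (connect1 xaF') _.
Qed.

Hypotheses (k_sink : forall b, (k, b) \notin F')
           (m_k : ~~ connect (Defs.frel F') m k).

Lemma connect_add_edge_from y :
  connect (Defs.frel Fk) k y -> y = k \/ connect (Defs.frel F') m y.
Proof.
case/connectP=> [[|a p] /=]; first by move=> _ ->; left.
case/andP=> ka pth ->; have am : a = m.
  by move: ka; rewrite /Defs.frel !inE => /orP [/eqP [->] | /(negP (k_sink a))].
rewrite am in pth *; right; have [] := @connect_add_edge m (last m p) => //.
  by apply/connectP; exists p.
by case=> mk; move: m_k; rewrite mk.
Qed.

End AddEdge.

End Forests.

Section OutEdge.
Variables (n : nat) (G : rel 'I_n) (Nb : {set 'I_n}) (k : 'I_n).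
Hypothesis k_Nb : k \notin Nb.
Implicit Types (F : {set 'I_n * 'I_n}) (S : {set 'I_n}).

Lemma forest_add_edge F' m :
  is_forest G (k |: Nb) F' -> G k m -> ~~ connect (Defs.frel F') m k ->
  is_forest G Nb ((k, m) |: F').
Proof.
move=> fF' Gkm m_k; have k_sink := forest_root_sink fF' (setU11 k Nb).
have /forestP [F'_G F'_root F'_deg F'_acyc] := fF'.
apply/forestP; split.
- by move=> p /setU1P [-> // | /F'_G].
- move=> v vNb; have vk : v != k by apply: contraNneq k_Nb => <-.
  by rewrite outdegU1 // F'_root ?(setU1r _ vNb) // (negPf vk).
- move=> v vNb; rewrite outdegU1 //; case: (eqVneq v k) => [->|vk].
    by rewrite F'_root ?setU11.
  by rewrite F'_deg // !inE negb_or vk.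
move=> p /setU1P [-> /= | pF'].
  by apply/negP=> /connect_add_edge [|[]]; rewrite (negPf m_k).
have p12 : Defs.frel F' p.1 p.2 by rewrite /Defs.frel -surjective_pairing.
apply/negP=> /connect_add_edge [p21|[p2k /(connect_add_edge_from k_sink m_k) [p1k|m_p1]]].
- by move: (F'_acyc p pF'); rewrite p21.
- by move: p12; rewrite p1k /Defs.frel (negPf (k_sink _)).
- by move: m_k; rewrite (connect_trans m_p1 (connect_trans (connect1 p12) p2k)).
Qed.

Lemma forest_del_edge F' m : (forall b, (k, b) \notin F') ->
  is_forest G Nb ((k, m) |: F') ->
  [&& is_forest G (k |: Nb) F', ~~ connect (Defs.frel F') m k & G k m].
Proof.
move=> k_sink /forestP [Fk_G Fk_root Fk_deg Fk_acyc].
have m_k : ~~ connect (Defs.frel F') m k.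
  by apply: contra (Fk_acyc _ (setU11 _ _)) => /(connect_subU1 k m).
rewrite m_k (Fk_G _ (setU11 _ _)) /= andbT; apply/forestP; split.
- by move=> p pF'; apply/Fk_G/setU1r.
- move=> v /setU1P [-> | vNb]; first exact/eqP/outdeg0P.
  by have /eqP := outdegU1 v (k_sink m); rewrite Fk_root // eq_sym addn_eq0 => /andP [/eqP].
- move=> v; rewrite !inE negb_or => /andP [vk vNb].
  by have := outdegU1 v (k_sink m); rewrite Fk_deg // (negPf vk) addn0.
by move=> p pF'; apply: contra (Fk_acyc _ (setU1r _ pF')) => /(connect_subU1 k m).
Qed.

(* A forest rooted at [Nb] is the out-edge [(k, m)] of [k] together with a
   forest rooted at [k |: Nb] in which [m] does not drain into [k]. *)
Let detach F := (F :\: [set p | p.1 == k], odflt k [pick m | (k, m) \in F]).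
Let attach (Fm : {set 'I_n * 'I_n} * 'I_n) := (k, Fm.2) |: Fm.1.

Lemma detachK F : is_forest G Nb F -> attach (detach F) = F.
Proof.
move=> fF; have /forestP [_ _ F_deg _] := fF.
have [m0 km0] := outdeg1_ex (F_deg k k_Nb).
rewrite /attach /=; case: pickP => [m km|/(_ m0)]; last by rewrite km0.
apply/setP=> -[a b]; rewrite !inE xpair_eqE /=; case: (eqVneq a k) => [->|] //=.
rewrite orbF; apply/eqP/idP => [-> // | kb]; exact: forest_functional fF kb km.
Qed.

Lemma attachK F' m : (forall b, (k, b) \notin F') -> detach (attach (F', m)) = (F', m).
Proof.
move=> k_sink; rewrite /detach /attach /=; congr (_, _).
  apply/setP=> -[a b]; rewrite !inE xpair_eqE /=.
  by case: (eqVneq a k) => [->|] //=; rewrite (negPf (k_sink b)).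
case: pickP => [m' | /(_ m)]; last by rewrite setU11.
by case/setU1P => [[->] | /(negP (k_sink m'))].
Qed.

Lemma attach_forestE F' m :
  is_forest G Nb (attach (F', m)) && (detach (attach (F', m)) == (F', m)) =
  [&& is_forest G (k |: Nb) F', ~~ connect (Defs.frel F') m k & G k m].
Proof.
apply/andP/and3P => [[fFk /eqP dFk] | [fF' m_k Gkm]].
  have k_sink b : (k, b) \notin F' by rewrite -[F'](congr1 fst dFk) !inE eqxx.
  exact/and3P/forest_del_edge.
have k_sink := forest_root_sink fF' (setU11 k Nb).
by rewrite forest_add_edge // attachK.
Qed.

Lemma big_forest_out_edge (T : Type) (idx : T) (op : Monoid.com_law idx)
    (g : {set 'I_n * 'I_n} -> T) :
  \big[op/idx]_(F | is_forest G Nb F) g F =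
  \big[op/idx]_(F' | is_forest G (k |: Nb) F')
     \big[op/idx]_(m | ~~ connect (Defs.frel F') m k && G k m) g ((k, m) |: F').
Proof.
rewrite (reindex_onto attach detach detachK) pair_big_dep.
by apply: eq_bigl => -[F' m]; rewrite attach_forestE.
Qed.

Lemma in_tree_of_add_edge S F' m x :
  S \subset Nb -> is_forest G (k |: Nb) F' -> ~~ connect (Defs.frel F') m k ->
  in_tree_of ((k, m) |: F') S x =
  (if connect (Defs.frel F') x k then in_tree_of F' S m else in_tree_of F' S x).
Proof.
move=> SNb fF' m_k; have k_sink := forest_root_sink fF' (setU11 k Nb).
case: ifPn => [xk | x_k]; apply/existsP/existsP => -[r /andP [rS xr]];
  exists r; rewrite rS //=.
- have r_k : r != k by apply: contraNneq k_Nb => <-; apply: (subsetP SNb).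
  have rNb : r \in k |: Nb by rewrite setU1r ?(subsetP SNb).
  case: (connect_add_edge xr) => [xr' | [_ kr]]; last first.
    by case: (connect_add_edge_from k_sink m_k kr) => // /eqP; rewrite (negPf r_k).
  case/orP: (connect_functional (fun _ _ _ => forest_functional fF') xk xr') => [kr|rk].
    by move/(forest_root fF' (setU11 k Nb))/eqP: kr; rewrite (negPf r_k).
  by move/(forest_root fF' rNb)/eqP: rk; rewrite eq_sym (negPf r_k).
- apply: connect_trans (connect_subU1 k m xk) _.
  by apply: connect_trans (connect_subU1 k m xr); apply/connect1/setU11.
- by case: (connect_add_edge xr) => // -[xk _]; rewrite xk in x_k.
- exact: connect_subU1.
Qed.

End OutEdge.

Local Open Scope ring_scope.

Lemma sumr_antisym (K : comPzRingType) (I : finType) (Q : pred I) (x b : I -> K) :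
  \sum_(i | Q i) \sum_(j | Q j) x i * x j * (b j - b i) = 0.
Proof.
have split_term i j : x i * x j * (b j - b i) = x i * x j * b j - x j * x i * b i.
  by rewrite mulrBr [x j * x i]mulrC.
under eq_bigr do under eq_bigr do rewrite split_term.
under eq_bigr do rewrite sumrB.
by rewrite sumrB [X in _ - X]exchange_big /= subrr.
Qed.

Definition harmonic (K : pzRingType) (n : nat) (a : 'I_n -> 'I_n -> K) (u : 'I_n -> K) :=
  forall k, \sum_(j | j != k) a j k * (u j - u k) = 0.

Lemma harmonicN (K : pzRingType) n (a : 'I_n -> 'I_n -> K) (u : 'I_n -> K) :
  harmonic a u -> harmonic a (fun x => - u x).
Proof.
move=> hu k; under eq_bigr do rewrite -opprD mulrN.
by rewrite sumrN hu oppr0.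
Qed.

Section KernelBasis.
Variables (K : numClosedFieldType) (n : nat) (w : 'I_n -> 'I_n -> K).
Local Notation Nb := (NB (edgeG w)).
Local Notation B := (basins (edgeG w)).
Local Notation forest F := (is_forest (edgeG' w) Nb F).
Implicit Types (S : {set 'I_n}).

Lemma trmx_Omega_mul_eq0 (v : 'cV[K]_n) :
  (Omega w)^T *m v = 0 <-> harmonic w (fun x => v x 0).
Proof.
have Omega_vE k : ((Omega w)^T *m v) k 0 = \sum_(j | j != k) w j k * (v j 0 - v k 0).
  rewrite mxE (bigD1 k) //= !mxE eqxx mulNr mulr_suml -sumrN addrC -big_split /=.
  by apply: eq_bigr => j jk; rewrite !mxE (negPf jk) mulrBr.
split=> [vK k | hv]; first by rewrite -Omega_vE vK mxE.
by apply/colP=> k; rewrite Omega_vE hv mxE.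
Qed.

Lemma sum_scale_evecE (P : pred 'I_n) (c : 'I_n -> K) x :
  (\sum_(l | P l) c l *: evec K l) x 0 = if P x then c x else 0.
Proof.
rewrite summxE big_mkcond (bigD1 x) //= big1 ?addr0 => [|l lx].
  by rewrite !mxE eqxx; case: (P x); rewrite ?mulr1.
by rewrite !mxE eq_sym (negPf lx) mulr0; case: (P l).
Qed.

Definition forest_weight := \sum_(F | forest F) Wt w F.

Definition absorb_weight S x := \sum_(F | forest F && in_tree_of F S x) Wt w F.

Lemma absorb_weight_NB S x :
  x \in Nb -> absorb_weight S x = if x \in S then forest_weight else 0.
Proof.
move=> xNb; rewrite /absorb_weight.
rewrite (eq_bigl (fun F => forest F && (x \in S))) => [|F]; last first.
  by case: (boolP (forest F)) => //= fF; rewrite (in_tree_of_root _ fF xNb).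
case: (x \in S); first by apply: eq_bigl => F; rewrite andbT.
by rewrite big_pred0 // => F; rewrite andbF.
Qed.

Lemma kappa'E S x : S \in B -> kappa' w S x 0 = absorb_weight S x.
Proof.
move=> SB; rewrite /kappa' /= scaler_sumr mxE !sum_scale_evecE.
case: (boolP (x \in Nb)) => xNb /=; first by rewrite absorb_weight_NB // addr0.
suff /negPf -> : x \notin S by rewrite add0r.
by apply: contra xNb; apply/subsetP/basin_subset_NB.
Qed.

Lemma edgeG'_transient k m : k \notin Nb -> edgeG' w k m = edgeG w k m.
Proof.
move=> kNb; rewrite /edgeG'; case: (edgeG w k m) => //=.
apply/negP=> /exists_inP [S SB /andP [kS _]].
by move: kNb; rewrite (subsetP (basin_subset_NB SB)).
Qed.

(* After [big_forest_out_edge], the terms of the balance equation at [k] for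
   the pairs [(m, j)] and [(j, m)] cancel. *)
Lemma absorb_weight_harmonic_at S k : S \subset Nb -> k \notin Nb ->
  \sum_(j | j != k) w j k * (absorb_weight S j - absorb_weight S k) = 0.
Proof.
move=> SNb kNb.
pose ind F x : K := if in_tree_of F S x then 1 else 0.
have ind_sum x : absorb_weight S x = \sum_(F | forest F) ind F x * Wt w F.
  by rewrite /absorb_weight big_mkcondr; apply: eq_bigr => F _; rewrite /ind; case: ifP;
     rewrite ?mul1r ?mul0r.
under eq_bigr do rewrite !ind_sum -sumrB mulr_sumr.
rewrite exchange_big /= (big_forest_out_edge _ kNb) /=; apply: big1 => F' fF'.
pose Q j := ~~ connect (Defs.frel F') j k.
have Q_k : Q k = false by rewrite /Q connect0.
have ind_add m j : Q m -> ind ((k, m) |: F') j = if Q j then ind F' j else ind F' m.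
  by move=> Qm; rewrite /ind (in_tree_of_add_edge (G := edgeG' w) kNb) // /Q; case: connect.
have Wt_add m : Wt w ((k, m) |: F') = w m k * Wt w F'.
  by rewrite /Wt big_setU1 //= (forest_root_sink fF' (setU11 k Nb)).
have inner m : Q m ->
    \sum_(j | j != k) w j k * (ind ((k, m) |: F') j * Wt w ((k, m) |: F')
                               - ind ((k, m) |: F') k * Wt w ((k, m) |: F')) =
    \sum_(j | Q j) w m k * w j k * (ind F' j - ind F' m) * Wt w F'.
  move=> Qm; rewrite (bigID Q) /= [X in _ + X]big1 ?addr0 => [|j /andP [_ /negPf nQj]].
    apply: eq_big => [j | j /andP [_ Qj]].
      by apply: andb_idl; apply: contraTneq => ->; rewrite negbK connect0.
    rewrite Wt_add !ind_add // Qj Q_k; ring.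
  by rewrite !ind_add // nQj Q_k subrr mulr0.
rewrite big_mkcondr /= (eq_bigr (fun m =>
  \sum_(j | Q j) w m k * w j k * (ind F' j - ind F' m) * Wt w F')) => [|m Qm].
  by under eq_bigr do rewrite -mulr_suml; rewrite -mulr_suml sumr_antisym mul0r.
case: ifPn => [_|]; first exact: inner.
have mk : m != k by apply: contraTneq Qm => ->; rewrite negbK connect0.
rewrite (edgeG'_transient _ kNb) /edgeG mk negbK => /eqP wmk0.
by rewrite big1 // => j _; rewrite wmk0 !mul0r.
Qed.

Lemma absorb_weight_harmonic S : S \in B -> harmonic w (absorb_weight S).
Proof.
move=> SB k; have SNb := basin_subset_NB SB.
have [kNb | /absorb_weight_harmonic_at -> //] := boolP (k \in Nb).
have [S' S'B kS'] := bigcupP kNb; apply: big1 => j jk.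
have [-> | wjk] := eqVneq (w j k) 0; first by rewrite mul0r.
have jS' : j \in S'.
  by apply: (basin_closed (e := edgeG w) _ kS'); [rewrite inE in S'B | rewrite /edgeG jk].
have jNb : j \in Nb by apply/bigcupP; exists S'.
by rewrite !absorb_weight_NB // !(mem_basin SB S'B) // subrr mulr0.
Qed.

Lemma kappa'_harmonic S : S \in B -> (Omega w)^T *m kappa' w S = 0.
Proof.
move=> SB; apply/trmx_Omega_mul_eq0 => k.
by under eq_bigr do rewrite !kappa'E //; apply: absorb_weight_harmonic.
Qed.

Lemma span_kappa'_harmonic (c : {set 'I_n} -> K) :
  (Omega w)^T *m (\sum_(S in B) c S *: kappa' w S) = 0.
Proof.
by rewrite mulmx_sumr big1 // => S SB; rewrite -scalemxAr kappa'_harmonic ?scaler0.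
Qed.

End KernelBasis.

Section BfsForest.
Variables (n : nat) (e : rel 'I_n).
Local Notation Nb := (NB e).

Fixpoint reach_NB i : {set 'I_n} :=
  if i is i'.+1 then reach_NB i' :|: [set x | [exists y in reach_NB i', e x y]] else Nb.

Lemma reach_NB_exists x : exists i, x \in reach_NB i.
Proof.
have [S bS [y yS /connectP [p pth yl]]] := connect_basin e x.
have yNb : y \in Nb by apply/bigcupP; exists S; rewrite ?inE.
exists (size p); elim: p x pth yl => [|a p IHp] x /=; first by move=> _ <-.
case/andP=> xa pth yl; rewrite !inE; apply/orP; right.
by apply/exists_inP; exists a; rewrite ?(IHp _ pth yl).
Qed.

Definition dist_NB x := ex_minn (reach_NB_exists x).

Lemma dist_NB_step x : x \notin Nb -> exists y, e x y && (dist_NB y < dist_NB x)%N.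
Proof.
move=> xNb; rewrite {2}/dist_NB; case: ex_minnP => [[|i] /= x_i i_min].
  by rewrite x_i in xNb.
move: x_i; rewrite !inE => /orP [/i_min | /exists_inP [y y_i exy]]; first by rewrite ltnn.
by exists y; rewrite exy /= ltnS /dist_NB; case: ex_minnP => j _ /(_ _ y_i).
Qed.

Definition next_NB x := odflt x [pick y | e x y && (dist_NB y < dist_NB x)%N].

Lemma next_NB_closer x :
  x \notin Nb -> e x (next_NB x) && (dist_NB (next_NB x) < dist_NB x)%N.
Proof.
move=> xNb; rewrite /next_NB; case: pickP => [y //|no_y].
by have [y] := dist_NB_step xNb; rewrite no_y.
Qed.

Definition bfs_forest : {set 'I_n * 'I_n} :=
  [set p | (p.1 \notin Nb) && (p.2 == next_NB p.1)].

Lemma bfs_forest_edge p : p \in bfs_forest ->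
  [&& p.1 \notin Nb, e p.1 p.2 & (dist_NB p.2 < dist_NB p.1)%N].
Proof. by rewrite inE => /andP [pNb /eqP ->]; rewrite pNb next_NB_closer. Qed.

Lemma is_forest_bfs : is_forest (fun x y => (x \notin Nb) && e x y) Nb bfs_forest.
Proof.
have dist_connect x y : connect (Defs.frel bfs_forest) x y -> (dist_NB y <= dist_NB x)%N.
  case/connectP=> p + ->; elim: p x => [|a p IHp] x //= /andP [/bfs_forest_edge/and3P [_ _]].
  by move=> lt_ax /IHp /leq_trans; apply; apply: ltnW.
apply/forestP; split.
- by move=> p /bfs_forest_edge/and3P [-> ->].
- by move=> v vNb; apply/eqP/outdeg0P=> y; rewrite inE /= vNb.
- move=> v vNb; apply/eqP/cards1P; exists (v, next_NB v).
  apply/setP=> -[a b]; rewrite !inE xpair_eqE /=.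
  by case: (eqVneq a v) => [->|]; rewrite ?vNb ?eqxx ?andbF ?andbT.
move=> p /bfs_forest_edge/and3P [_ _ lt_p]; apply/negP=> /dist_connect.
by rewrite leqNgt lt_p.
Qed.

End BfsForest.

Lemma forest_weight_gt0 (K : numClosedFieldType) n (w : 'I_n -> 'I_n -> K) :
  (forall j k, 0 <= w j k) -> 0 < forest_weight w.
Proof.
move=> w_ge0; have Wt_gt0 F : is_forest (edgeG' w) (NB (edgeG w)) F -> 0 < Wt w F.
  case/forestP=> F_G _ _ _; apply: prodr_gt0 => p /F_G /andP [/andP [_ wp] _].
  by rewrite lt0r wp w_ge0.
have bfs : is_forest (edgeG' w) (NB (edgeG w)) (bfs_forest (edgeG w)).
  by apply: forest_sub (is_forest_bfs _) => x y /andP [xNb exy]; rewrite edgeG'_transient.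
rewrite /forest_weight (bigD1 _ bfs) /= ltr_wpDr ?Wt_gt0 //.
by apply: sumr_ge0 => F /andP [fF _]; apply/ltW/Wt_gt0.
Qed.

Section MaximumPrinciple.
Variables (R : realDomainType) (n : nat) (a : 'I_n -> 'I_n -> R) (e : rel 'I_n).
Hypotheses (a_ge0 : forall j k, 0 <= a j k)
           (e_a : forall k j, e k j -> (j != k) && (a j k != 0)).

(* At a maximum the balance equation is a sum of nonnegative terms. *)
Lemma harmonic_max_edge u k j :
  harmonic a u -> (forall y, u y <= u k) -> e k j -> u j = u k.
Proof.
move=> hu u_max /e_a /andP [jk ajk].
have terms_ge0 i : i != k -> 0 <= a i k * (u k - u i).
  by move=> _; rewrite mulr_ge0 ?subr_ge0.
have sum0 : \sum_(i | i != k) a i k * (u k - u i) = 0.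
  by under eq_bigr do rewrite -opprB mulrN; rewrite sumrN hu oppr0.
move/eqP: (psumr_eq0P terms_ge0 sum0 jk).
by rewrite mulf_eq0 (negPf ajk) subr_eq0 => /eqP.
Qed.

Lemma harmonic_max_connect u x y :
  harmonic a u -> (forall z, u z <= u x) -> connect e x y -> u y = u x.
Proof.
move=> hu u_max /connectP [p + ->]; elim: p x u_max => [|b p IHp] x u_max //= /andP [exb pth].
have ub := harmonic_max_edge hu u_max exb.
by rewrite (IHp b) // => z; rewrite ub.
Qed.

Lemma harmonic_le0 u : harmonic a u ->
  (forall S, is_basin e S -> exists2 z, z \in S & u z = 0) -> forall y, u y <= 0.
Proof.
move=> hu u_basin y; have [x _ u_max] := @arg_maxP _ _ _ y predT u isT.
have [S bS [x' x'S xx']] := connect_basin e x.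
have [z zS uz0] := u_basin S bS.
have xz : connect e x z := connect_trans xx' (basin_connect bS x'S zS).
have uzx : u z = u x := harmonic_max_connect hu (fun t => u_max t isT) xz.
by rewrite -uz0 uzx; apply: u_max.
Qed.

Lemma harmonic_eq0 u : harmonic a u ->
  (forall S, is_basin e S -> exists2 z, z \in S & u z = 0) -> forall y, u y = 0.
Proof.
move=> hu u_basin y; apply/eqP; rewrite eq_le harmonic_le0 //= -oppr_le0.
apply: harmonic_le0 (harmonicN hu) _ y => S /u_basin [z zS uz0].
by exists z; rewrite ?uz0 ?oppr0.
Qed.

End MaximumPrinciple.

Section ComplexKernel.
Variables (R : rcfType) (n : nat).
Local Open Scope complex_scope.

Lemma harmonic_ReIm (a : 'I_n -> 'I_n -> R) (u : 'I_n -> R[i]) :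
  harmonic (fun j k => (a j k)%:C) u ->
  harmonic a (fun x => complex.Re (u x)) /\ harmonic a (fun x => complex.Im (u x)).
Proof.
move=> hu; split=> k.
  transitivity (complex.Re (\sum_(j | j != k) (a j k)%:C * (u j - u k))); last by rewrite hu.
  rewrite (linear_sum (@complex.Re R : Rcomplex R -> R)).
  by apply: eq_bigr => j _; case: (u j) (u k) => [? ?] [? ?] /=; rewrite mul0r subr0.
transitivity (complex.Im (\sum_(j | j != k) (a j k)%:C * (u j - u k))); last by rewrite hu.
rewrite (linear_sum (@complex.Im R : Rcomplex R -> R)).
by apply: eq_bigr => j _; case: (u j) (u k) => [? ?] [? ?] /=; rewrite mul0r addr0.
Qed.

Variables (w : 'I_n -> 'I_n -> R[i]).
Hypothesis w_ge0 : forall j k, 0 <= w j k.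

Lemma harmonicC_eq0 u : harmonic w u ->
  (forall S, S \in basins (edgeG w) -> exists2 z, z \in S & u z = 0) -> forall x, u x = 0.
Proof.
move=> hu u_basin x; pose a j k := complex.Re (w j k).
have wE j k : w j k = (a j k)%:C by rewrite RRe_real ?ger0_real.
have a_ge0 j k : 0 <= a j k by rewrite -ler0c -wE.
have e_a k j : edgeG w k j -> (j != k) && (a j k != 0).
  by case/andP=> -> /=; apply: contra => /eqP a0; rewrite wE a0.
have [] := @harmonic_ReIm a u.
  by move=> k; rewrite -[RHS](hu k); apply: eq_bigr => j _; rewrite wE.
move=> /(harmonic_eq0 a_ge0 e_a) hRe /(harmonic_eq0 a_ge0 e_a) hIm.
have u_basin' S : is_basin (edgeG w) S -> exists2 z, z \in S & u z = 0.
  by move=> bS; apply: u_basin; rewrite inE.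
apply/eqP; rewrite eq_complex /= hRe ?hIm ?eqxx // => S /u_basin' [z zS uz0];
  by exists z; rewrite ?uz0.
Qed.

End ComplexKernel.

Section Adjoint.
Variable C : numClosedFieldType.

Lemma dag_mul m p q (A : 'M[C]_(m, p)) (B : 'M[C]_(p, q)) : dag (A *m B) = dag B *m dag A.
Proof. by rewrite /dag map_mxM trmx_mul. Qed.

Lemma mxtrace_mul_dag_ge0 m p (B : 'M[C]_(m, p)) : 0 <= \tr (B *m dag B).
Proof.
apply: sumr_ge0 => i _; rewrite mxE; apply: sumr_ge0 => j _.
by rewrite !mxE mul_conjC_ge0.
Qed.

(* [tr (P A Q A^+)] is the squared Frobenius norm of [P A Q]. *)
Lemma mxtrace_proj_ge0 m (P Q A : 'M[C]_m) :
  P *m P = P -> Q *m Q = Q -> dag P = P -> dag Q = Q ->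
  0 <= \tr (P *m A *m Q *m dag A).
Proof.
move=> PP QQ dP dQ.
have -> : P *m A *m Q *m dag A = P *m (P *m A *m Q *m Q *m dag A).
  by rewrite !mulmxA PP -[P *m A *m Q *m Q](mulmxA _ Q Q) QQ.
rewrite mxtrace_mulC (_ : _ *m P = (P *m A *m Q) *m dag (P *m A *m Q)).
  exact: mxtrace_mul_dag_ge0.
by rewrite !dag_mul dP dQ !mulmxA.
Qed.

Lemma wmat_ge0 n N (pi : 'I_n -> 'M[C]_n) (L : 'I_N -> 'M[C]_n) :
  (forall j, pi j *m pi j = pi j) -> (forall j, dag (pi j) = pi j) ->
  forall j k, 0 <= wmat pi L j k.
Proof. by move=> pi_idem pi_herm j k; apply: sumr_ge0 => a _; apply: mxtrace_proj_ge0. Qed.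

End Adjoint.

Section KappaBasis.
Variables (K : numClosedFieldType) (n : nat) (w : 'I_n -> 'I_n -> K).
Hypothesis w_ge0 : forall j k, 0 <= w j k.
Local Notation B := (basins (edgeG w)).

Lemma sum_kappa'_basin (c : {set 'I_n} -> K) S x : S \in B -> x \in S ->
  (\sum_(S' in B) c S' *: kappa' w S') x 0 = c S * forest_weight w.
Proof.
move=> SB xS; have xNb : x \in NB (edgeG w) by apply/bigcupP; exists S.
rewrite summxE (bigD1 S) //= big1 ?addr0 => [|S' /andP [S'B S'S]]; rewrite mxE kappa'E //;
  by rewrite absorb_weight_NB // (mem_basin _ SB xS) // ?eqxx // (negPf S'S) mulr0.
Qed.

Lemma kappa'_free (c : {set 'I_n} -> K) :
  \sum_(S in B) c S *: kappa' w S = 0 -> forall S, S \in B -> c S = 0.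
Proof.
move=> c0 S SB; have [x xS] := basin_nonempty SB.
have := sum_kappa'_basin c SB xS; rewrite c0 mxE => /esym/eqP.
by rewrite mulf_eq0 (gt_eqF (forest_weight_gt0 w_ge0)) orbF => /eqP.
Qed.

End KappaBasis.

Lemma kernel_Omega_span (R : rcfType) n (w : 'I_n -> 'I_n -> R[i]) (v : 'cV[R[i]]_n) :
  (forall j k, 0 <= w j k) -> (Omega w)^T *m v = 0 ->
  exists c, v = \sum_(S in basins (edgeG w)) c S *: kappa' w S.
Proof.
move=> w_ge0 Hv; have Z_neq0 := lt0r_neq0 (forest_weight_gt0 w_ge0).
pose c (S : {set 'I_n}) := if [pick x in S] is Some x then v x 0 / forest_weight w else 0.
exists c; apply/eqP; rewrite -subr_eq0; apply/eqP/colP => x; rewrite [RHS]mxE.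
set u := v - _; apply: (@harmonicC_eq0 _ _ w w_ge0 (fun x => u x 0)).
  by apply/trmx_Omega_mul_eq0; rewrite mulmxBr Hv span_kappa'_harmonic subrr.
move=> S SB; have [x0 x0S] := basin_nonempty SB.
suff [z zS cS] : exists2 z, z \in S & c S = v z 0 / forest_weight w.
  by exists z; rewrite // !mxE (sum_kappa'_basin c SB zS) cS mulfVK // subrr.
by rewrite /c; case: pickP => [z zS | /(_ x0)]; [exists z | rewrite x0S].
Qed.

Theorem mainTheorem5 (R : realType) (n N : nat)
  (L : 'I_N -> 'M[R[i]]_n) (pi : 'I_n -> 'M[R[i]]_n) :
  (0 < n)%N ->
  (forall j, pi j *m pi j = pi j) ->
  (forall j, dag (pi j) = pi j) ->
  (forall j, \rank (pi j) = 1%N) ->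
  (forall j k, j != k -> pi j *m pi k = 0) ->
  let w := wmat pi L in
  let B := basins (edgeG w) in
  (forall c : {set 'I_n} -> R[i],
      \sum_(S in B) c S *: kappa' w S = 0 -> forall S, S \in B -> c S = 0) /\
  (forall v : 'cV[R[i]]_n,
      (Omega w)^T *m v = 0 <->
      exists c : {set 'I_n} -> R[i], v = \sum_(S in B) c S *: kappa' w S).
Proof.
move=> _ pi_idem pi_herm _ _ w B; have w_ge0 := wmat_ge0 L pi_idem pi_herm.
split=> [|v]; first exact: kappa'_free.
split; first exact: kernel_Omega_span.
by case=> c ->; apply: span_kappa'_harmonic.
Qed.
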